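(* Let $\alpha: I\to M$ be a unit-speed curve on an oriented surface $M\subset E^3$ with Darboux frame $\{T,V,U\}$ and curvatures $k_g,k_n,\tau_g$. Consider the curve $\gamma$ defined in either of the following two cases: (a) $k_g\equiv0$ and $k_n,\tau_g$ nowhere zero on $I$, and $\gamma(s)=\alpha(s)+\frac{k_n'(s)}{k_n(s)^2\tau_g(s)}V(s)+\frac{1}{k_n(s)}U(s)$; (b) $k_g$ nowhere zero on $I$, $c_3$ a real constant, $\psi$ an antiderivative of $k_n\tau_g/k_g$, $\Phi$ an antiderivative of $e^{-\psi}\tau_g/k_g$, and $$\gamma(s)=\alpha(s)+\Big(\frac{k_n}{k_g}e^{\psi}(\Phi-c_3)+\frac{1}{k_g}\Big)(s)\,V(s)+\big(e^{\psi}(c_3-\Phi)\big)(s)\,U(s).$$ In either case assume $\gamma$ is regular. Then $\gamma$ is a general helix if and only if $\alpha$ is a relatively normal-slant helix on $M$.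
   Context: $M$ is an oriented surface in Euclidean 3-space $E^3$ and $\alpha:I\to M$ is a unit-speed curve with arc-length parameter $s$. Its Darboux frame $\{T,V,U\}$ consists of the unit tangent $T=\alpha'$, the unit surface normal $U$ of $M$ along $\alpha$, and $V=U\times T$; it satisfies $T'=k_gV+k_nU$, $V'=-k_gT+\tau_gU$, $U'=-k_nT-\tau_gV$, where $k_g,k_n,\tau_g$ are the geodesic curvature, normal curvature and geodesic torsion. A regular curve is a general helix if its unit tangent makes a constant angle with a fixed direction. $\alpha$ is a relatively normal-slant helix if $\langle V,d\rangle$ is constant for some fixed unit vector $d$. *)

From Stdlib Require Import Reals.
From Coquelicot Require Import Coquelicot.
Open Scope R_scope.

Definition vec3 : Type := (R * R * R)%type.
Definition vx (v : vec3) : R := fst (fst v).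
Definition vy (v : vec3) : R := snd (fst v).
Definition vz (v : vec3) : R := snd v.
Definition mkv (x y z : R) : vec3 := (x, y, z).
Definition vadd (u v : vec3) : vec3 := mkv (vx u + vx v) (vy u + vy v) (vz u + vz v).
Definition vscal (a : R) (v : vec3) : vec3 := mkv (a * vx v) (a * vy v) (a * vz v).
Definition dot (u v : vec3) : R := vx u * vx v + vy u * vy v + vz u * vz v.
Definition cross (u v : vec3) : vec3 :=
  mkv (vy u * vz v - vz u * vy v) (vz u * vx v - vx u * vz v) (vx u * vy v - vy u * vx v).
Definition vnorm (v : vec3) : R := sqrt (dot v v).
Definition vzero : vec3 := mkv 0 0 0.

Definition in_I (a b : Rbar) (s : R) : Prop := Rbar_lt a s /\ Rbar_lt s b.

Definition is_vderive (f : R -> vec3) (s : R) (v : vec3) : Prop :=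
  is_derive (fun t => vx (f t)) s (vx v) /\
  is_derive (fun t => vy (f t)) s (vy v) /\
  is_derive (fun t => vz (f t)) s (vz v).
Definition ex_vderive (f : R -> vec3) (s : R) : Prop :=
  ex_derive (fun t => vx (f t)) s /\ ex_derive (fun t => vy (f t)) s /\
  ex_derive (fun t => vz (f t)) s.
Definition vDerive (f : R -> vec3) (s : R) : vec3 :=
  mkv (Derive (fun t => vx (f t)) s) (Derive (fun t => vy (f t)) s)
      (Derive (fun t => vz (f t)) s).

Definition smooth_on (a b : Rbar) (f : R -> R) : Prop :=
  forall n s, in_I a b s -> ex_derive (Derive_n f n) s.

(** Unit-speed curve alpha on an oriented surface M (with unit normal
    field N) together with its Darboux frame {T,V,U} and curvatures
    kg, kn, taug, satisfying the Darboux equations on I. *)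
Definition darboux_curve (a b : Rbar) (M : vec3 -> Prop) (N : vec3 -> vec3)
  (alpha T V U : R -> vec3) (kg kn taug : R -> R) : Prop :=
  (forall p, M p -> vnorm (N p) = 1) /\
  forall s, in_I a b s ->
    M (alpha s) /\
    is_vderive alpha s (T s) /\
    vnorm (T s) = 1 /\
    U s = N (alpha s) /\
    dot (T s) (U s) = 0 /\
    V s = cross (U s) (T s) /\
    is_vderive T s (vadd (vscal (kg s) (V s)) (vscal (kn s) (U s))) /\
    is_vderive V s (vadd (vscal (- kg s) (T s)) (vscal (taug s) (U s))) /\
    is_vderive U s (vadd (vscal (- kn s) (T s)) (vscal (- taug s) (V s))).

Definition regular_on (a b : Rbar) (g : R -> vec3) : Prop :=
  forall s, in_I a b s -> ex_vderive g s /\ vDerive g s <> vzero.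

Definition unit_tangent (g : R -> vec3) (s : R) : vec3 :=
  vscal (/ vnorm (vDerive g s)) (vDerive g s).

Definition general_helix (a b : Rbar) (g : R -> vec3) : Prop :=
  exists d : vec3, vnorm d = 1 /\
    exists c : R, forall s, in_I a b s -> dot (unit_tangent g s) d = c.

Definition rel_normal_slant_helix (a b : Rbar) (V : R -> vec3) : Prop :=
  exists d : vec3, vnorm d = 1 /\
    exists c : R, forall s, in_I a b s -> dot (V s) d = c.

Definition gammaA (alpha V U : R -> vec3) (kn taug : R -> R) (s : R) : vec3 :=
  vadd (alpha s)
   (vadd (vscal (Derive kn s / (kn s ^ 2 * taug s)) (V s))
         (vscal (/ kn s) (U s))).

Definition gammaB (alpha V U : R -> vec3) (kg kn : R -> R) (c3 : R)
  (psi Phi : R -> R) (s : R) : vec3 :=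
  vadd (alpha s)
   (vadd (vscal (kn s / kg s * exp (psi s) * (Phi s - c3) + / kg s) (V s))
         (vscal (exp (psi s) * (c3 - Phi s)) (U s))).

(** Both curves have the form [gamma = alpha + f V + g U] with [f kg + g kn = 1]
    and [f taug + g' = 0]; by the Darboux equations the [T]- and [U]-components
    of [gamma'] cancel, so [gamma' = h V] with [h = f' - g taug], and the unit
    tangent of [gamma] is [sign(h) V].  If [<sign(h) V, d>] is constant, the
    continuous function [<V, d>] takes only two opposite values, hence is constant
    by the intermediate value theorem.  Conversely, if [<V, d> = c <> 0] then
    [<gamma, d>' = h c] never vanishes, so [h] has constant sign by Darboux's
    theorem ([h] need not be continuous), and [<sign(h) V, d>] is constant. *)

From Stdlib Require Import Reals Lra Classical Ranalysis5.
From Coquelicot Require Import Coquelicot.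
Open Scope R_scope.

Lemma vec_eq (u v : vec3) : vx u = vx v -> vy u = vy v -> vz u = vz v -> u = v.
Proof.
  destruct u as [[x y] z], v as [[x' y'] z']; unfold vx, vy, vz; simpl.
  intros -> -> ->; reflexivity.
Qed.

Lemma dot_scal_l k u d : dot (vscal k u) d = k * dot u d.
Proof. unfold dot, vscal, mkv, vx, vy, vz; simpl; ring. Qed.

Lemma dot_self_ge0 u : 0 <= dot u u.
Proof. unfold dot; nra. Qed.

Lemma dot_self_unit u : vnorm u = 1 -> dot u u = 1.
Proof.
  unfold vnorm; intro Hu.
  rewrite <- (sqrt_sqrt _ (dot_self_ge0 u)), Hu; ring.
Qed.

Lemma vnorm_scal k u : vnorm (vscal k u) = Rabs k * vnorm u.
Proof.
  unfold vnorm.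
  replace (dot (vscal k u) (vscal k u)) with (Rsqr k * dot u u)
    by (unfold Rsqr, dot, vscal, mkv, vx, vy, vz; simpl; ring).
  rewrite sqrt_mult_alt by apply Rle_0_sqr.
  now rewrite sqrt_Rsqr_abs.
Qed.

Lemma dot_cross_self u t :
  dot (cross u t) (cross u t) = dot u u * dot t t - dot u t * dot u t.
Proof. unfold dot, cross, mkv, vx, vy, vz; simpl; ring. Qed.

Lemma vnorm_cross_unit u t :
  vnorm u = 1 -> vnorm t = 1 -> dot t u = 0 -> vnorm (cross u t) = 1.
Proof.
  intros Hu Ht Htu.
  assert (Hut : dot u t = 0)
    by (rewrite <- Htu; unfold dot; ring).
  unfold vnorm.
  rewrite dot_cross_self, !dot_self_unit, Hut by assumption.
  replace (1 * 1 - 0 * 0) with 1 by ring.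
  apply sqrt_1.
Qed.

Lemma is_vderive_vDerive f s v : is_vderive f s v -> vDerive f s = v.
Proof.
  intros (Hx & Hy & Hz).
  apply vec_eq; unfold vDerive, mkv, vx, vy, vz; simpl;
    apply is_derive_unique; assumption.
Qed.

Lemma is_vderive_vadd u v s u' v' :
  is_vderive u s u' -> is_vderive v s v' ->
  is_vderive (fun t => vadd (u t) (v t)) s (vadd u' v').
Proof.
  intros (Hx & Hy & Hz) (Kx & Ky & Kz).
  split; [|split]; [exact (is_derive_plus _ _ _ _ _ Hx Kx)
                  | exact (is_derive_plus _ _ _ _ _ Hy Ky)
                  | exact (is_derive_plus _ _ _ _ _ Hz Kz)].
Qed.

Lemma is_vderive_vscal (f : R -> R) (u : R -> vec3) s f' u' :
  is_derive f s f' -> is_vderive u s u' ->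
  is_vderive (fun t => vscal (f t) (u t)) s
    (vadd (vscal f' (u s)) (vscal (f s) u')).
Proof.
  intros Hf (Hx & Hy & Hz).
  split; [|split]; eapply Derive.is_derive_mult; eassumption.
Qed.

Lemma is_derive_dot (f : R -> vec3) s v d :
  is_vderive f s v -> is_derive (fun t => dot (f t) d) s (dot v d).
Proof.
  intros (Hx & Hy & Hz).
  assert (Hmul : forall g l, is_derive g s l ->
            forall k, is_derive (fun t => g t * k) s (l * k)).
  { intros g l Hg k; replace (l * k) with (l * k + g s * 0) by ring.
    exact (Derive.is_derive_mult g (fun _ => k) s l 0 Hg (is_derive_const k s)). }
  unfold dot.
  exact (is_derive_plus _ _ _ _ _
           (is_derive_plus _ _ _ _ _ (Hmul _ _ Hx _) (Hmul _ _ Hy _)) (Hmul _ _ Hz _)).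
Qed.

Lemma is_vderive_frame_combination (alpha T V U : R -> vec3)
    (kg kn taug f g : R -> R) s f' g' :
  is_vderive alpha s (T s) ->
  is_vderive V s (vadd (vscal (- kg s) (T s)) (vscal (taug s) (U s))) ->
  is_vderive U s (vadd (vscal (- kn s) (T s)) (vscal (- taug s) (V s))) ->
  is_derive f s f' -> is_derive g s g' ->
  f s * kg s + g s * kn s = 1 -> f s * taug s + g' = 0 ->
  is_vderive (fun t => vadd (alpha t) (vadd (vscal (f t) (V t)) (vscal (g t) (U t))))
    s (vscal (f' - g s * taug s) (V s)).
Proof.
  intros Halpha HV HU Hf Hg HT0 HU0.
  assert (Hcoord : forall t v u : R,
    t + (f' * v + f s * (- kg s * t + taug s * u)
         + (g' * u + g s * (- kn s * t + - taug s * v)))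
    = (f' - g s * taug s) * v).
  { intros t v u.
    transitivity ((f' - g s * taug s) * v + t * (1 - (f s * kg s + g s * kn s))
                  + u * (f s * taug s + g')); [ring|].
    rewrite HT0, HU0; ring. }
  assert (Hd := is_vderive_vadd _ _ s _ _ Halpha
                  (is_vderive_vadd _ _ s _ _ (is_vderive_vscal _ _ s _ _ Hf HV)
                                             (is_vderive_vscal _ _ s _ _ Hg HU))).
  match type of Hd with is_vderive _ _ ?w =>
    replace (vscal (f' - g s * taug s) (V s)) with w by (apply vec_eq; apply Hcoord)
  end.
  exact Hd.
Qed.

Lemma is_derive_pos_right g x y l :
  is_derive g x l -> 0 < l -> x < y -> exists t, x < t <= y /\ g x < g t.
Proof.
  intros Hg Hl Hxy.
  destruct (proj1 (is_derive_Reals _ _ _) Hg (l / 2) ltac:(lra)) as [del Hdel].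
  set (h := Rmin (del / 2) (y - x)).
  assert (Hh : 0 < h < del /\ h <= y - x).
  { assert (0 < del) by apply cond_pos.
    assert (h <= del / 2) by apply Rmin_l.
    assert (h <= y - x) by apply Rmin_r.
    assert (0 < h) by (apply Rmin_glb_lt; lra).
    lra. }
  exists (x + h); split; [lra|].
  specialize (Hdel h ltac:(lra) ltac:(rewrite Rabs_pos_eq; lra)).
  apply Rabs_def2 in Hdel.
  assert (Hq : 0 < (g (x + h) - g x) / h) by lra.
  assert (0 < (g (x + h) - g x) / h * h) by (apply Rmult_lt_0_compat; lra).
  replace ((g (x + h) - g x) / h * h) with (g (x + h) - g x) in * by (field; lra).
  lra.
Qed.

Lemma is_derive_neg_left g x y l :
  is_derive g y l -> l < 0 -> x < y -> exists t, x <= t < y /\ g y < g t.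
Proof.
  intros Hg Hl Hxy.
  assert (Hr : is_derive (fun t => g (- t)) (- y) (- l)).
  { replace (- l) with (-1 * l) by ring.
    apply (is_derive_comp g Ropp); [now rewrite Ropp_involutive|].
    auto_derive; [exact I|ring]. }
  destruct (is_derive_pos_right _ (- y) (- x) (- l) Hr) as [t [Ht Hgt]]; [lra|lra|].
  exists (- t); rewrite Ropp_involutive in Hgt; split; [lra|exact Hgt].
Qed.

Lemma is_derive_no_sign_change g g' x y :
  x < y -> (forall z, x <= z <= y -> is_derive g z (g' z)) ->
  (forall z, x <= z <= y -> g' z <> 0) -> 0 < g' x -> 0 < g' y.
Proof.
  intros Hxy Hd Hn Hx.
  destruct (Rlt_or_le 0 (g' y)) as [|Hy]; [assumption|exfalso].
  assert (Hy' : g' y < 0) by (destruct Hy as [|E]; [assumption|exfalso; apply (Hn y); lra]).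
  assert (Hcont : forall z, x <= z <= y -> continuity_pt g z).
  { intros z Hz; apply derivable_continuous_pt.
    exists (g' z); apply is_derive_Reals, Hd, Hz. }
  destruct (continuity_ab_maj g x y (Rlt_le _ _ Hxy) Hcont) as [m [Hmax Hm]].
  destruct (Req_dec m x) as [->|Hmx]; [|destruct (Req_dec m y) as [->|Hmy]].
  - destruct (is_derive_pos_right g x y (g' x)) as [t [Ht Hgt]];
      [apply Hd; lra|lra|lra|].
    specialize (Hmax t ltac:(lra)); lra.
  - destruct (is_derive_neg_left g x y (g' y)) as [t [Ht Hgt]];
      [apply Hd; lra|lra|lra|].
    specialize (Hmax t ltac:(lra)); lra.
  - assert (Hm' : derivable_pt_lim g m (g' m)) by (apply is_derive_Reals, Hd; lra).
    apply (Hn m); [lra|].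
    exact (deriv_maximum g x y m (exist _ (g' m) Hm') ltac:(lra) ltac:(lra)
             ltac:(intros; apply Hmax; lra)).
Qed.

Lemma continuous_no_sign_change f x y :
  x < y -> (forall z, x <= z <= y -> continuity_pt f z) ->
  (forall z, x <= z <= y -> f z <> 0) -> 0 < f x -> 0 < f y.
Proof.
  intros Hxy Hc Hn Hx.
  destruct (Rlt_or_le 0 (f y)) as [|Hy]; [assumption|exfalso].
  assert (Hy' : f y < 0) by (destruct Hy as [|E]; [assumption|exfalso; apply (Hn y); lra]).
  destruct (IVT_interv (fun t => - f t) x y) as [z [Hz Hfz]]; [| |lra|lra|].
  - intros z Hz; apply continuity_pt_opp, Hc, Hz.
  - exact Hxy.
  - apply (Hn z Hz); lra.
Qed.

Section SignOnInterval.

Variables a b : Rbar.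

Lemma in_I_between x y z : in_I a b x -> in_I a b y -> x <= z <= y -> in_I a b z.
Proof. unfold in_I; destruct a, b; simpl; intuition lra. Qed.

Lemma sign_constant_on_I f :
  (forall t, in_I a b t -> f t <> 0) ->
  (forall x y, in_I a b x -> in_I a b y -> x < y -> 0 < f x -> 0 < f y) ->
  (forall x y, in_I a b x -> in_I a b y -> x < y -> f x < 0 -> f y < 0) ->
  (forall t, in_I a b t -> 0 < f t) \/ (forall t, in_I a b t -> f t < 0).
Proof.
  intros Hn Hpos Hneg.
  assert (Hsame : forall x y, in_I a b x -> in_I a b y -> 0 < f x -> 0 < f y).
  { intros x y Hx Hy Hfx.
    destruct (Rtotal_order x y) as [Hxy|[<-|Hyx]]; [exact (Hpos x y Hx Hy Hxy Hfx)|exact Hfx|].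
    destruct (Rlt_or_le 0 (f y)) as [|Hfy]; [assumption|exfalso].
    assert (f y < 0) by (destruct Hfy as [|E]; [assumption|exfalso; exact (Hn y Hy E)]).
    specialize (Hneg y x Hy Hx Hyx); lra. }
  destruct (classic (exists s0, in_I a b s0 /\ 0 < f s0)) as [[s0 [Hs0 Hf0]]|Hnone].
  - left; intros t Ht; exact (Hsame s0 t Hs0 Ht Hf0).
  - right; intros t Ht.
    destruct (Rlt_or_le 0 (f t)) as [Hft|[|E]]; [|assumption|exfalso; exact (Hn t Ht E)].
    exfalso; apply Hnone; exists t; split; assumption.
Qed.

Lemma continuous_sign_constant f :
  (forall t, in_I a b t -> continuity_pt f t) -> (forall t, in_I a b t -> f t <> 0) ->
  (forall t, in_I a b t -> 0 < f t) \/ (forall t, in_I a b t -> f t < 0).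
Proof.
  intros Hc Hn.
  apply sign_constant_on_I; [exact Hn|..]; intros x y Hx Hy Hxy Hfx.
  - apply (continuous_no_sign_change f x y Hxy); [intros z Hz..|exact Hfx];
      [apply Hc | apply Hn]; exact (in_I_between x y z Hx Hy Hz).
  - enough (0 < - f y) by lra.
    apply (continuous_no_sign_change (fun t => - f t) x y Hxy); [| |lra].
    + intros z Hz; apply continuity_pt_opp, Hc, (in_I_between x y z Hx Hy Hz).
    + intros z Hz E; apply (Hn z (in_I_between x y z Hx Hy Hz)); lra.
Qed.

Lemma derive_sign_constant g g' :
  (forall t, in_I a b t -> is_derive g t (g' t)) -> (forall t, in_I a b t -> g' t <> 0) ->
  (forall t, in_I a b t -> 0 < g' t) \/ (forall t, in_I a b t -> g' t < 0).
Proof.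
  intros Hd Hn.
  apply sign_constant_on_I; [exact Hn|..]; intros x y Hx Hy Hxy Hfx.
  - apply (is_derive_no_sign_change g g' x y Hxy); [intros z Hz..|exact Hfx];
      [apply Hd | apply Hn]; exact (in_I_between x y z Hx Hy Hz).
  - enough (0 < - g' y) by lra.
    apply (is_derive_no_sign_change (fun t => - g t) (fun t => - g' t) x y Hxy); [| |lra].
    + intros z Hz; exact (is_derive_opp g z (g' z) (Hd z (in_I_between x y z Hx Hy Hz))).
    + intros z Hz E; apply (Hn z (in_I_between x y z Hx Hy Hz)); lra.
Qed.

End SignOnInterval.

Lemma Rdiv_Rabs_self_cases x :
  x <> 0 -> (0 < x /\ x / Rabs x = 1) \/ (x < 0 /\ x / Rabs x = -1).
Proof.
  intro Hx; destruct (Rlt_or_le 0 x) as [Hp|[Hn|E]]; [left|right|contradiction].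
  - rewrite Rabs_pos_eq by lra; split; [lra|field; lra].
  - rewrite Rabs_left by lra; split; [lra|field; lra].
Qed.

Lemma ex_vderive_is_vderive f s : ex_vderive f s -> exists v, is_vderive f s v.
Proof.
  intros ([lx Hx] & [ly Hy] & [lz Hz]).
  exists (mkv lx ly lz); split; [|split]; assumption.
Qed.

Section TangentAlongV.

Variables (a b : Rbar) (gm V : R -> vec3) (h : R -> R).
Hypothesis Hgm : forall s, in_I a b s -> is_vderive gm s (vscal (h s) (V s)).
Hypothesis HV1 : forall s, in_I a b s -> vnorm (V s) = 1.
Hypothesis HVd : forall s, in_I a b s -> ex_vderive V s.
Hypothesis Hreg : regular_on a b gm.

Lemma speed_coef_neq0 s : in_I a b s -> h s <> 0.
Proof.
  intros Hs E; apply (proj2 (Hreg s Hs)).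
  rewrite (is_vderive_vDerive _ _ _ (Hgm s Hs)), E.
  apply vec_eq; unfold vscal, vzero, mkv, vx, vy, vz; simpl; ring.
Qed.

Lemma dot_unit_tangent s d :
  in_I a b s -> dot (unit_tangent gm s) d = h s / Rabs (h s) * dot (V s) d.
Proof.
  intro Hs; unfold unit_tangent.
  rewrite (is_vderive_vDerive _ _ _ (Hgm s Hs)), vnorm_scal, HV1, !dot_scal_l, Rmult_1_r by exact Hs.
  unfold Rdiv; ring.
Qed.

Lemma general_helix_rel_normal_slant : general_helix a b gm -> rel_normal_slant_helix a b V.
Proof.
  intros [d [Hd [c Hc]]]; exists d; split; [exact Hd|].
  set (f t := dot (V t) d).
  assert (Hf : forall t, in_I a b t -> f t = c \/ f t = - c).
  { intros t Ht; specialize (Hc t Ht); rewrite dot_unit_tangent in Hc by exact Ht.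
    destruct (Rdiv_Rabs_self_cases (h t) (speed_coef_neq0 t Ht)) as [[_ E]|[_ E]];
      rewrite E in Hc; unfold f; lra. }
  destruct (Req_dec c 0) as [->|Hc0].
  { exists 0; intros t Ht; destruct (Hf t Ht); unfold f in *; lra. }
  destruct (continuous_sign_constant a b f) as [Hpos|Hneg].
  - intros t Ht; apply continuity_pt_filterlim.
    destruct (ex_vderive_is_vderive V t (HVd t Ht)) as [v Hv].
    apply (ex_derive_continuous f); exists (dot v d); exact (is_derive_dot V t v d Hv).
  - intros t Ht; destruct (Hf t Ht); lra.
  - exists (Rabs c); intros t Ht; specialize (Hpos t Ht).
    fold (f t); unfold Rabs; destruct Rcase_abs; destruct (Hf t Ht); lra.
  - exists (- Rabs c); intros t Ht; specialize (Hneg t Ht).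
    fold (f t); unfold Rabs; destruct Rcase_abs; destruct (Hf t Ht); lra.
Qed.

Lemma rel_normal_slant_general_helix : rel_normal_slant_helix a b V -> general_helix a b gm.
Proof.
  intros [d [Hd [c Hc]]]; exists d; split; [exact Hd|].
  destruct (Req_dec c 0) as [->|Hc0].
  { exists 0; intros s Hs; rewrite dot_unit_tangent, Hc by exact Hs; ring. }
  assert (Hder : forall s, in_I a b s -> is_derive (fun t => dot (gm t) d) s (h s * c)).
  { intros s Hs; rewrite <- (Hc s Hs), <- dot_scal_l; exact (is_derive_dot _ _ _ d (Hgm s Hs)). }
  destruct (derive_sign_constant a b _ _ Hder) as [Hpos|Hneg].
  - intros s Hs; apply Rmult_integral_contrapositive_currified; [exact (speed_coef_neq0 s Hs)|exact Hc0].
  - exists (Rabs c); intros s Hs; specialize (Hpos s Hs).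
    rewrite dot_unit_tangent, Hc by exact Hs.
    destruct (Rdiv_Rabs_self_cases (h s) (speed_coef_neq0 s Hs)) as [[Hh ->]|[Hh ->]];
      unfold Rabs; destruct Rcase_abs; nra.
  - exists (- Rabs c); intros s Hs; specialize (Hneg s Hs).
    rewrite dot_unit_tangent, Hc by exact Hs.
    destruct (Rdiv_Rabs_self_cases (h s) (speed_coef_neq0 s Hs)) as [[Hh ->]|[Hh ->]];
      unfold Rabs; destruct Rcase_abs; nra.
Qed.

Lemma general_helix_iff_rel_normal_slant :
  general_helix a b gm <-> rel_normal_slant_helix a b V.
Proof.
  split; [exact general_helix_rel_normal_slant | exact rel_normal_slant_general_helix].
Qed.

End TangentAlongV.

Section DarbouxCurve.

Variables (a b : Rbar) (M : vec3 -> Prop) (N : vec3 -> vec3)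
          (alpha T V U : R -> vec3) (kg kn taug : R -> R).
Hypothesis Hcurve : darboux_curve a b M N alpha T V U kg kn taug.

Lemma darboux_V_unit s : in_I a b s -> vnorm (V s) = 1.
Proof.
  destruct Hcurve as [HN Hd]; intro Hs.
  destruct (Hd s Hs) as (HM & _ & HT & HU & HTU & -> & _).
  apply vnorm_cross_unit; [rewrite HU; exact (HN _ HM)|exact HT|exact HTU].
Qed.

Lemma darboux_V_derivable s : in_I a b s -> ex_vderive V s.
Proof.
  destruct Hcurve as [_ Hd]; intro Hs.
  destruct (Hd s Hs) as (_ & _ & _ & _ & _ & _ & _ & (Hx & Hy & Hz) & _).
  split; [|split]; eexists; eassumption.
Qed.

Lemma gammaA_velocity :
  (forall s, in_I a b s -> ex_derive kn s /\ ex_derive (Derive kn) s /\ ex_derive taug s) ->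
  (forall s, in_I a b s -> kg s = 0 /\ kn s <> 0 /\ taug s <> 0) ->
  exists h, forall s, in_I a b s ->
    is_vderive (gammaA alpha V U kn taug) s (vscal (h s) (V s)).
Proof.
  destruct Hcurve as [_ Hd]; intros Hdiff Hk.
  set (f t := Derive kn t / (kn t ^ 2 * taug t)).
  exists (fun s => Derive f s - / kn s * taug s); intros s Hs.
  destruct (Hd s Hs) as (_ & Halpha & _ & _ & _ & _ & _ & HV & HU).
  destruct (Hk s Hs) as (Hkg & Hkn & Htaug), (Hdiff s Hs) as (Dkn & DDkn & Dtaug).
  apply (is_vderive_frame_combination alpha T V U kg kn taug f (fun t => / kn t) s
           _ (- Derive kn s / kn s ^ 2)); try assumption.
  - apply Derive_correct; unfold f; auto_derive; repeat split; auto.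
    repeat apply Rmult_integral_contrapositive_currified; auto; lra.
  - apply is_derive_inv; [apply Derive_correct|]; assumption.
  - rewrite Hkg; field; assumption.
  - unfold f; field; split; assumption.
Qed.

Lemma gammaB_velocity (c3 : R) (psi Phi : R -> R) :
  (forall s, in_I a b s -> ex_derive kg s /\ ex_derive kn s) ->
  (forall s, in_I a b s -> kg s <> 0) ->
  (forall s, in_I a b s -> is_derive psi s (kn s * taug s / kg s)) ->
  (forall s, in_I a b s -> is_derive Phi s (exp (- psi s) * taug s / kg s)) ->
  exists h, forall s, in_I a b s ->
    is_vderive (gammaB alpha V U kg kn c3 psi Phi) s (vscal (h s) (V s)).
Proof.
  destruct Hcurve as [_ Hd]; intros Hdiff Hkg Hpsi HPhi.
  set (f t := kn t / kg t * exp (psi t) * (Phi t - c3) + / kg t).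
  set (g t := exp (psi t) * (c3 - Phi t)).
  exists (fun s => Derive f s - g s * taug s); intros s Hs.
  destruct (Hd s Hs) as (_ & Halpha & _ & _ & _ & _ & _ & HV & HU).
  specialize (Hkg s Hs); destruct (Hdiff s Hs) as (Dkg & Dkn).
  assert (Dpsi := Hpsi s Hs); assert (DPhi := HPhi s Hs).
  apply (is_vderive_frame_combination alpha T V U kg kn taug f g s _
           (exp (psi s) * (kn s * taug s / kg s) * (c3 - Phi s)
            - exp (psi s) * (exp (- psi s) * taug s / kg s))); try assumption.
  - apply Derive_correct; unfold f; auto_derive; repeat split; auto;
      eexists; eassumption.
  - unfold g; auto_derive.
    + repeat split; eexists; eassumption.
    + replace (Derive (fun x => psi x) s) with (kn s * taug s / kg s)
        by (symmetry; apply is_derive_unique; exact Dpsi).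
      replace (Derive (fun x => Phi x) s) with (exp (- psi s) * taug s / kg s)
        by (symmetry; apply is_derive_unique; exact DPhi).
      ring.
  - unfold f, g; field; assumption.
  - unfold f, g; rewrite exp_Ropp; field; split; [apply Rgt_not_eq, exp_pos|assumption].
Qed.

End DarbouxCurve.

Theorem theorem3p14 :
  forall (a b : Rbar) (M : vec3 -> Prop) (N : vec3 -> vec3)
         (alpha T V U : R -> vec3) (kg kn taug : R -> R),
    Rbar_lt a b ->
    darboux_curve a b M N alpha T V U kg kn taug ->
    smooth_on a b kg -> smooth_on a b kn -> smooth_on a b taug ->
    (* case (a) *)
    ((forall s, in_I a b s -> kg s = 0 /\ kn s <> 0 /\ taug s <> 0) ->
     regular_on a b (gammaA alpha V U kn taug) ->
     (general_helix a b (gammaA alpha V U kn taug) <->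
      rel_normal_slant_helix a b V))
    /\
    (* case (b) *)
    (forall (c3 : R) (psi Phi : R -> R),
     (forall s, in_I a b s -> kg s <> 0) ->
     (forall s, in_I a b s -> is_derive psi s (kn s * taug s / kg s)) ->
     (forall s, in_I a b s -> is_derive Phi s (exp (- psi s) * taug s / kg s)) ->
     regular_on a b (gammaB alpha V U kg kn c3 psi Phi) ->
     (general_helix a b (gammaB alpha V U kg kn c3 psi Phi) <->
      rel_normal_slant_helix a b V)).
Proof.
  intros a b M N alpha T V U kg kn taug _ Hcurve Hkg Hkn Htaug.
  assert (HV1 := darboux_V_unit a b M N alpha T V U kg kn taug Hcurve).
  assert (HVd := darboux_V_derivable a b M N alpha T V U kg kn taug Hcurve).
  split.
  - intros Hk Hreg.
    destruct (gammaA_velocity a b M N alpha T V U kg kn taug Hcurve) as [h Hh];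
      [intros s Hs; exact (conj (Hkn 0%nat s Hs) (conj (Hkn 1%nat s Hs) (Htaug 0%nat s Hs)))
      |exact Hk|].
    exact (general_helix_iff_rel_normal_slant a b _ V h Hh HV1 HVd Hreg).
  - intros c3 psi Phi Hkg0 Hpsi HPhi Hreg.
    destruct (gammaB_velocity a b M N alpha T V U kg kn taug Hcurve c3 psi Phi) as [h Hh];
      [intros s Hs; exact (conj (Hkg 0%nat s Hs) (Hkn 0%nat s Hs))|exact Hkg0|exact Hpsi|exact HPhi|].
    exact (general_helix_iff_rel_normal_slant a b _ V h Hh HV1 HVd Hreg).
Qed.
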